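(* Let $k\ge r\ge3$ and $m,m'\ge 0$ be integers, and let $\pi\in\mathbb{C}_{=}(k,r|m)$. Then $\pi\in\mathbb{C}_{<}(k,r|m')$ if and only if $m<m'$.
   Context: A partition $\pi=(\pi_1,\dots,\pi_\ell)$ is a finite non-increasing sequence of positive integers; ''$a$ occurs in $\pi$'' means $a=\pi_i$ for some $i$. Göllnitz–Gordon marking: $GG(\pi)$ assigns a positive integer (mark) to each part, processing the parts from smallest to largest; $\pi_i$ receives the smallest positive integer different from the marks of all parts $\pi_g$ with $g>i$ and $\pi_i-\pi_g\le 2$, where $\pi_i-\pi_g<2$ is required when $\pi_i$ is odd. An ''$r$-marked part $a$'' is a part equal to $a$ with mark $r$. $N_i(\pi)$ is the number of parts with mark $i$; $\pi^{(i)}_1\ge\dots\ge\pi^{(i)}_{N_i(\pi)}$ are the parts with mark $i$, with $\pi^{(i)}_0=+\infty$, $\pi^{(i)}_{N_i(\pi)+1}=-\infty$. $\mathbb{C}(k,r)$: partitions with (i) no odd part repeated; (ii) $\pi_i\ge\pi_{i+k-1}+2$ for $1\le i\le\ell-k+1$, strict if $\pi_i$ even; (iii) at most $r-1$ parts $\le 2$. Starting types: for $\pi\in\mathbb{C}(k,r)$ with $N_2=N_2(\pi)\ge1$, let $l$ be the largest integer in $\{0,\dots,N_2\}$ such that no odd part of $\pi$ is $\ge\pi^{(2)}_l$; for $l<i\le N_2$, $\pi^{(2)}_i$ has type $s_{-1}$. For $b=1,\dots,l$ in increasing order, type and auxiliary $\sigma_b$: for $b=1$: Case 1: 1-marked part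 $\pi^{(2)}_1-1$ exists and $\pi^{(2)}_1+2$ does not occur: type $s_0$, $\sigma_1=\pi^{(2)}_1-1$; Case 2: 1-marked $\pi^{(2)}_1-2$ exists and $\pi^{(2)}_1+2$ does not occur: type $s_1$, $\sigma_1=\pi^{(2)}_1-2$; Case 3: 1-marked $\pi^{(2)}_1+2$ exists: type $s_2$, $\sigma_1=\pi^{(2)}_1+2$; Case 4: 1-marked $\pi^{(2)}_1$ exists: type $s_3$, $\sigma_1=\pi^{(2)}_1$. For $2\le b\le l$: Case 1: 1-marked $\pi^{(2)}_b-1$ exists and, if a 1-marked $\pi^{(2)}_b+2$ exists, $\sigma_{b-1}=\pi^{(2)}_b+2$: type $s_0$, $\sigma_b=\pi^{(2)}_b-1$; Case 2: same with $\pi^{(2)}_b-2$: type $s_1$, $\sigma_b=\pi^{(2)}_b-2$; Case 3: 1-marked $\pi^{(2)}_b+2$ exists and $\sigma_{b-1}\ne\pi^{(2)}_b+2$: type $s_2$, $\sigma_b=\pi^{(2)}_b+2$; Case 4: 1-marked $\pi^{(2)}_b$ exists: type $s_3$, $\sigma_b=\pi^{(2)}_b$. $\mathbb{C}_{<}(k,r|p,t)$ (for $p,t\ge0$): the set of $\pi\in\mathbb{C}(k,r)$ such that (1) no odd part is $\ge 2t+1$; (2) $\pi^{(2)}_{p+1}<2t+1<\pi^{(2)}_p$ (in particular $p\le N_2(\pi)$); (3) if $\pi^{(2)}_p=2t+2$ then it is of starting type $s_2$ or $s_3$; (4) if $\pi^{(2)}_{p+1}=2t$ then it is of starting type $s_0$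 or $s_1$. $\mathbb{C}_{=}(k,r|p,t)$ (for $p,t\ge0$): the set of $\pi\in\mathbb{C}(k,r)$ such that (1) the largest odd part is $2t+1$; (2) the mark of $2t+1$ in $GG(\pi)$ is at most $2$; (3) $\pi^{(2)}_p\ge 2t+2$ and $\pi^{(2)}_{p+1}\le 2t+2$; (4) if there is a 2-marked part $2t+2$ of starting type $s_0$, then $\pi^{(2)}_{p+1}=2t+2$ and there exists $1\le i\le p+1$ with $\pi^{(2)}_i=\pi^{(2)}_{p+1}+4(p-i+1)$ and $\pi^{(2)}_i$ occurring exactly once in $\pi$; (5) if there is a 2-marked part $2t+2$ of starting type $s_2$, then $\pi^{(2)}_p=2t+2$; (6) if $2t+2$ occurs in $\pi$ and there is no 2-marked part $2t+2$, then $\pi^{(2)}_p=2t+4$, it is of starting type $s_3$, and there exists $1\le i\le p$ with $\pi^{(2)}_i=\pi^{(2)}_p+4(p-i)$ such that $\pi^{(2)}_i+2$ does not occur in $\pi$. For $m\ge0$: $\mathbb{C}_{<}(k,r|m)=\bigcup_{p+t=m}\mathbb{C}_{<}(k,r|p,t)$ and $\mathbb{C}_{=}(k,r|m)=\bigcup_{p+t=m}\mathbb{C}_{=}(k,r|p,t)$, unions over integers $p,t\ge0$. *)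

(* Partitions are non-increasing seq nat with
   positive parts; list position 0 corresponds to pi_1. *)
From mathcomp Require Import all_boot.
Set Implicit Arguments. Unset Strict Implicit. Unset Printing Implicit Defensive.

Definition is_partition (s : seq nat) : bool :=
  sorted geq s && all (fun x => 0 < x) s.

Definition mex1 (l : seq nat) : nat :=
  head 0 [seq j <- iota 1 (size l).+1 | j \notin l].

(* GG-condition: part y (with larger index) is within reach of part x *)
Definition gg_near (x y : nat) : bool :=
  if odd x then x - y < 2 else x - y <= 2.

(* Goellnitz-Gordon marking: gg s is the list of marks, aligned with s.
   Marks are assigned from the smallest (last) part to the largest. *)
Fixpoint gg (s : seq nat) : seq nat :=
  match s with
  | [::] => [::]
  | x :: s' =>
      let ms := gg s' in
      mex1 [seq pm.2 | pm <- zip s' ms & gg_near x pm.1] :: ms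
  end.

Definition marked_parts (i : nat) (s : seq nat) : seq nat :=
  [seq pm.1 | pm <- zip s (gg s) & pm.2 == i].

Definition N_ (i : nat) (s : seq nat) : nat := size (marked_parts i s).

(* extended naturals for pi^(i)_0 = +oo and pi^(i)_{N_i+1} = -oo *)
Inductive ext := MInf | Fin of nat | PInf.

Definition ext_lt (a b : ext) : bool :=
  match a, b with
  | MInf, MInf => false
  | MInf, _ => true
  | Fin x, Fin y => x < y
  | Fin _, PInf => true
  | Fin _, MInf => false
  | PInf, _ => false
  end.

Definition ext_le (a b : ext) : bool :=
  match a, b with
  | MInf, _ => true
  | Fin x, Fin y => x <= y
  | Fin _, PInf => true
  | Fin _, MInf => false
  | PInf, PInf => true
  | PInf, _ => false
  end.

Definition ext_eqn (a : ext) (n : nat) : bool :=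
  if a is Fin x then x == n else false.

(* pi^(i)_j (1-based j); indices beyond N_i + 1 are never used meaningfully
   (the statements below require p <= N_2 explicitly) and are set to -oo. *)
Definition mp (i : nat) (s : seq nat) (j : nat) : ext :=
  if j == 0 then PInf
  else if j <= N_ i s then Fin (nth 0 (marked_parts i s) j.-1)
  else MInf.

(* the finite value of pi^(2)_b for 1 <= b <= N_2 *)
Definition p2 (s : seq nat) (b : nat) : nat := nth 0 (marked_parts 2 s) b.-1.

Definition occurs (s : seq nat) (a : nat) : bool := a \in s.

Definition one_marked (s : seq nat) (a : nat) : bool :=
  has (fun pm => (pm.1 == a) && (pm.2 == 1)) (zip s (gg s)).

(* the starting types; Snone = no case applies *)
Inductive stype := Sm1 | S0 | S1 | S2 | S3 | Snone.

Definition stype_eqb (a b : stype) : bool :=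
  match a, b with
  | Sm1, Sm1 | S0, S0 | S1, S1 | S2, S2 | S3, S3 | Snone, Snone => true
  | _, _ => false
  end.

Definition no_odd_ge (s : seq nat) (j : nat) : bool :=
  all (fun x => ~~ odd x || ext_lt (Fin x) (mp 2 s j)) s.

Definition lmax (s : seq nat) : nat :=
  last 0 [seq j <- iota 0 (N_ 2 s).+1 | no_odd_ge s j].

(* existence of a 1-marked part a with a + d = v (avoids truncated minus) *)
Definition one_marked_minus (s : seq nat) (v d : nat) : bool :=
  has (fun pm => (pm.1 + d == v) && (pm.2 == 1)) (zip s (gg s)).

(* starting type and sigma of the 2-marked part with index b = n+1, for b <= l.
   Cases are tried in the order 1,2,3,4 (first applicable case). *)
Fixpoint st_rec (s : seq nat) (n : nat) : stype * nat :=
  match n with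
  | 0 =>
      let v := p2 s 1 in
      if one_marked_minus s v 1 && ~~ occurs s (v + 2) then (S0, v - 1)
      else if one_marked_minus s v 2 && ~~ occurs s (v + 2) then (S1, v - 2)
      else if one_marked s (v + 2) then (S2, v + 2)
      else if one_marked s v then (S3, v)
      else (Snone, 0)
  | n'.+1 =>
      let v := p2 s n.+1 in
      let sig := (st_rec s n').2 in
      let cond_up := ~~ one_marked s (v + 2) || (sig == v + 2) in
      if one_marked_minus s v 1 && cond_up then (S0, v - 1)
      else if one_marked_minus s v 2 && cond_up then (S1, v - 2)
      else if one_marked s (v + 2) && (sig != v + 2) then (S2, v + 2)
      else if one_marked s v then (S3, v)
      else (Snone, 0)
  end.

Definition start_type (s : seq nat) (b : nat) : stype :=
  if lmax s < b then Sm1 else (st_rec s b.-1).1.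

Definition has_type (s : seq nat) (b : nat) (T : stype) : bool :=
  stype_eqb (start_type s b) T.

Definition inC (k r : nat) (s : seq nat) : Prop :=
  is_partition s /\
  (forall x, odd x -> count_mem x s <= 1) /\
  (forall i, i + k.-1 < size s ->
     if odd (nth 0 s i) then nth 0 s (i + k.-1) + 2 <= nth 0 s i
     else nth 0 s (i + k.-1) + 2 < nth 0 s i) /\
  count (fun x => x <= 2) s <= r.-1.

Definition inC_lt_pt (k r p t : nat) (s : seq nat) : Prop :=
  inC k r s /\
  (forall x, x \in s -> odd x -> x < 2 * t + 1) /\
  p <= N_ 2 s /\
  ext_lt (mp 2 s p.+1) (Fin (2 * t + 1)) /\ ext_lt (Fin (2 * t + 1)) (mp 2 s p) /\
  (ext_eqn (mp 2 s p) (2 * t + 2) -> has_type s p S2 || has_type s p S3) /\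
  (ext_eqn (mp 2 s p.+1) (2 * t) -> has_type s p.+1 S0 || has_type s p.+1 S1).

Definition is_2marked_of_type (s : seq nat) (a : nat) (T : stype) : Prop :=
  exists b, [/\ 1 <= b, b <= N_ 2 s, p2 s b = a & has_type s b T].

Definition inC_eq_pt (k r p t : nat) (s : seq nat) : Prop :=
  inC k r s /\
  ((2 * t + 1) \in s /\ (forall x, x \in s -> odd x -> x <= 2 * t + 1)) /\
  (forall pm, pm \in zip s (gg s) -> pm.1 = 2 * t + 1 -> pm.2 <= 2) /\
  p <= N_ 2 s /\
  ext_le (Fin (2 * t + 2)) (mp 2 s p) /\ ext_le (mp 2 s p.+1) (Fin (2 * t + 2)) /\
  (* (4) *)
  (is_2marked_of_type s (2 * t + 2) S0 ->
     ext_eqn (mp 2 s p.+1) (2 * t + 2) /\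
     exists i, [/\ 1 <= i, i <= p.+1,
                   p2 s i = p2 s p.+1 + 4 * (p.+1 - i) & count_mem (p2 s i) s = 1]) /\
  (is_2marked_of_type s (2 * t + 2) S2 -> ext_eqn (mp 2 s p) (2 * t + 2)) /\
  (* (6) *)
  ((2 * t + 2) \in s -> ~ (2 * t + 2) \in marked_parts 2 s ->
     [/\ ext_eqn (mp 2 s p) (2 * t + 4), has_type s p S3 &
         exists i, [/\ 1 <= i, i <= p,
                       p2 s i = p2 s p + 4 * (p - i) & (p2 s i + 2) \notin s]]).

Definition inC_lt (k r m : nat) (s : seq nat) : Prop :=
  exists p t, p + t = m /\ inC_lt_pt k r p t s.

Definition inC_eq (k r m : nat) (s : seq nat) : Prop :=
  exists p t, p + t = m /\ inC_eq_pt k r p t s.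

(* Two parts with the same Goellnitz-Gordon mark are never within reach of each other, so
   consecutive 2-marked parts differ by at least 2, and by at least 4 when both are even, as are
   all 2-marked parts above the largest odd part 2t+1 of pi.

   If pi is in C_<(p', t'), then 2t+1 < 2t'+1, and when p' < p the 2-marked parts
   pi^(2)_(p'+1), ..., pi^(2)_p lie in [2t+2, 2t'] at mutual distance at least 4.  This forces
   p + t < p' + t', except when p = p'+1, t' = t+1 and pi^(2)_p = 2t+2; then condition (4) of
   C_< makes pi^(2)_p of type s_0 or s_1.  Type s_0 contradicts condition (4) of C_=, and type
   s_1 needs a 1-marked 2t, impossible because 2t+1, of mark at most 2, is within reach of both
   it and the 2-marked 2t+2.

   Conversely, let f(u) be the number of 2-marked parts above 2u+1.  Then u + f(u) is
   nondecreasing with increments at most 1 and is at most p + t + 1 at u = t + 1, so it equals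
   any given m' > p + t at a least u > t; pi then lies in C_<(f(u), u) or in C_<(f(u) - 1, u + 1). *)

From mathcomp Require Import all_boot zify.
Set Implicit Arguments. Unset Strict Implicit. Unset Printing Implicit Defensive.

Local Notation mark s i := (nth 0 (gg s) i).

Lemma before_head_filter_iota (P : pred nat) a n c :
  a <= c -> c < head 0 [seq j <- iota a n | P j] -> ~~ P c.
Proof.
elim: n a => [|n IHn] a /=; first by rewrite ltn0.
case Pa: (P a) => /= le_ac lt_c; first lia.
have [->|ne_ca] := eqVneq c a; first by rewrite Pa.
by apply: (IHn a.+1) => //; lia.
Qed.

Lemma mex1P l :
  [/\ 0 < mex1 l, mex1 l \notin l & forall c, 0 < c < mex1 l -> c \in l].
Proof.
rewrite /mex1; set F := [seq j <- _ | _].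
have: has (fun j => j \notin l) (iota 1 (size l).+1).
  apply/hasPn => sub_l.
  have := uniq_leq_size (iota_uniq 1 (size l).+1) (fun x Hx => negbNE (sub_l x Hx)).
  by rewrite size_iota ltnn.
rewrite has_filter -/F; case EF: F => [|h F'] // _.
have: h \in F by rewrite EF mem_head.
rewrite mem_filter mem_iota => /andP[h_notin /andP[h_gt0 _]].
split=> // c /andP[c_gt0 lt_ch].
have := @before_head_filter_iota (fun j => j \notin l) 1 (size l).+1 c c_gt0.
by rewrite -/F EF => /(_ lt_ch); rewrite negbK.
Qed.

Lemma size_gg s : size (gg s) = size s.
Proof. by elim: s => //= x s ->. Qed.

Lemma size_zip_gg s : size (zip s (gg s)) = size s.
Proof. by rewrite size_zip size_gg minnn. Qed.

Lemma nth_zip_gg s i : nth (0, 0) (zip s (gg s)) i = (nth 0 s i, mark s i).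
Proof. by rewrite nth_zip ?size_gg. Qed.

Lemma mem_zip_gg s i : i < size s -> (nth 0 s i, mark s i) \in zip s (gg s).
Proof. by move=> lt_i; rewrite -nth_zip_gg mem_nth ?size_zip_gg. Qed.

Lemma markP s i : i < size s ->
  [/\ 0 < mark s i,
      forall j, i < j < size s -> gg_near (nth 0 s i) (nth 0 s j) -> mark s j != mark s i &
      forall c, 0 < c < mark s i -> exists j,
        [/\ i < j < size s, gg_near (nth 0 s i) (nth 0 s j) & mark s j = c]].
Proof.
elim: s i => [|x s IHs] [|i] //= lt_i; last first.
  have [mark_gt0 mark_near mark_min] := IHs i lt_i.
  split=> // [[|j] //= /andP[lt_ij lt_j]|c]; first by apply: mark_near; rewrite -ltnS lt_ij.
  by case/mark_min=> j [/andP[lt_ij lt_j] near_j <-]; exists j.+1; rewrite !ltnS lt_ij.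
set L := [seq _ | _ <- _ & _]; have [mex_gt0 mex_notin mex_min] := mex1P L.
split=> //.
  move=> [|j] /andP[//= _ lt_j] near_j.
  apply: contraNneq mex_notin => <-; apply/mapP.
  by exists (nth 0 s j, mark s j); rewrite // mem_filter near_j mem_zip_gg.
move=> c /mex_min /mapP[[y d]]; rewrite mem_filter => /andP[near_y /(nthP (0, 0))[j]].
rewrite size_zip_gg nth_zip_gg => lt_j [? ?] ?; subst.
by exists j.+1; split; rewrite //= ltnS.
Qed.

Lemma mark_gt0 s i : i < size s -> 0 < mark s i.
Proof. by case/markP. Qed.

Lemma gg_nearE x y : gg_near x y = (x + odd x <= y + 2).
Proof. by rewrite /gg_near; case: (odd x); apply/idP/idP; lia. Qed.

Lemma mark_near_neq s i j : i < j < size s ->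
  gg_near (nth 0 s i) (nth 0 s j) -> mark s j != mark s i.
Proof.
case/andP=> lt_ij lt_j; case: (markP (ltn_trans lt_ij lt_j)) => _ near_neq _.
by apply: near_neq; rewrite lt_ij.
Qed.

Lemma mark_neq1_near1 s i : i < size s -> mark s i != 1 ->
  exists j, [/\ i < j < size s, gg_near (nth 0 s i) (nth 0 s j) & mark s j = 1].
Proof. by move=> lt_i ne1; case: (markP lt_i) => gt0 _; apply; lia. Qed.

Section SortedPartition.
Variable s : seq nat.
Hypothesis s_sorted : sorted geq s.

Lemma sorted_nth_geq i j : i <= j -> j < size s -> nth 0 s j <= nth 0 s i.
Proof.
move=> le_ij lt_j; have geq_trans : transitive geq by move=> ? ? ? /[swap]; apply: leq_trans.
by apply: (sorted_leq_nth geq_trans leqnn) => //; apply: leq_ltn_trans lt_j.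
Qed.

Lemma index_lt_of_nth_gt i j : j < size s -> nth 0 s j < nth 0 s i -> i < j.
Proof.
move=> lt_j lt_ji; have lt_i : i < size s.
  by rewrite ltnNge; apply: contraTN lt_ji => /(nth_default 0) ->.
by apply: contraTT lt_ji; rewrite -!leqNgt => /sorted_nth_geq; apply.
Qed.

Lemma mark_neq_near i j : j < size s -> nth 0 s j < nth 0 s i ->
  gg_near (nth 0 s i) (nth 0 s j) -> mark s i != mark s j.
Proof.
move=> lt_j lt_ji near_ij; rewrite eq_sym; apply: mark_near_neq near_ij.
by rewrite lt_j (index_lt_of_nth_gt lt_j lt_ji).
Qed.

Lemma one_marked_within2 i : i < size s -> mark s i != 1 ->
  exists2 j, j < size s &
    [/\ nth 0 s j <= nth 0 s i, nth 0 s i <= nth 0 s j + 2 & mark s j = 1].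
Proof.
move=> lt_i /(mark_neq1_near1 lt_i)[j [/andP[lt_ij lt_j] + mark_j]].
rewrite gg_nearE => near_ij; exists j => //.
have le_ji := sorted_nth_geq (ltnW lt_ij) lt_j.
split=> //; lia.
Qed.

End SortedPartition.

Lemma count_mem_nth_gt1 (s : seq nat) i j : i != j -> i < size s -> j < size s ->
  nth 0 s i = nth 0 s j -> 1 < count_mem (nth 0 s i) s.
Proof.
elim: s i j => [|x s IHs] [|i] [|j] //=; rewrite ?eqSS !ltnS => ne_ij lt_i lt_j.
- move=> ->; rewrite eqxx add1n ltnS -has_count; apply/hasP.
  by exists (nth 0 s j); rewrite ?mem_nth /=.
- move=> <-; rewrite eqxx add1n ltnS -has_count; apply/hasP.
  by exists (nth 0 s i); rewrite ?mem_nth /=.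
- by move=> /(IHs _ _ ne_ij lt_i lt_j) /leq_trans; apply; apply: leq_addl.
Qed.

Lemma mem_marked_parts c s y : y \in marked_parts c s ->
  exists2 i, i < size s & nth 0 s i = y /\ mark s i = c.
Proof.
case/mapP=> pm; rewrite mem_filter => /andP[/eqP mark_pm /(nthP (0, 0))[i]].
by rewrite size_zip_gg nth_zip_gg => lt_i pm_i; subst pm; exists i.
Qed.

Lemma mem_nth_marked_parts c s j : j < size (marked_parts c s) ->
  nth 0 (marked_parts c s) j \in s.
Proof. by move/(mem_nth 0)/mem_marked_parts => [i lt_i [<- _]]; apply: mem_nth. Qed.

Lemma one_marked_minusP s v d : reflect
  (exists2 i, i < size s & nth 0 s i + d = v /\ mark s i = 1) (one_marked_minus s v d).
Proof.
apply: (iffP (has_nthP (0, 0))); rewrite size_zip_gg => -[i lt_i].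
  by rewrite nth_zip_gg => /andP[/eqP ? /eqP ?]; exists i.
by case=> val_i mark_i; exists i; rewrite // nth_zip_gg /= val_i mark_i !eqxx.
Qed.

Lemma one_markedP s a : reflect
  (exists2 i, i < size s & nth 0 s i = a /\ mark s i = 1) (one_marked s a).
Proof.
apply: (iffP (has_nthP (0, 0))); rewrite size_zip_gg => -[i lt_i].
  by rewrite nth_zip_gg => /andP[/eqP ? /eqP ?]; exists i.
by case=> val_i mark_i; exists i; rewrite // nth_zip_gg /= val_i mark_i !eqxx.
Qed.

Definition gg_far (x y : nat) : bool := (y <= x) && ~~ gg_near x y.

Lemma gg_far_gap x y : gg_far x y -> y + 3 <= x + odd x.
Proof. by rewrite /gg_far gg_nearE; lia. Qed.

Lemma marked_parts_cons c x s : marked_parts c (x :: s) =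
  if mark (x :: s) 0 == c then x :: marked_parts c s else marked_parts c s.
Proof. by rewrite /marked_parts /=; case: ifP. Qed.

Lemma sorted_marked_parts c s : sorted geq s -> sorted gg_far (marked_parts c s).
Proof.
elim: s => [|x s IHs] // xs_sorted.
have {IHs}sorted_A := IHs (path_sorted xs_sorted).
rewrite marked_parts_cons; case: eqP => // mark_x.
suff far_x y : y \in marked_parts c s -> gg_far x y.
  by case: (marked_parts c s) sorted_A far_x => //= y A -> /(_ y (mem_head y A)) ->.
case/mem_marked_parts => j lt_j [<- mark_j]; apply/andP; split.
  exact: (sorted_nth_geq xs_sorted (leq0n j.+1)).
apply/negP => near_xj.
have /negP[] := @mark_near_neq (x :: s) 0 j.+1 (ltac:(by rewrite ltnS)) near_xj.
by rewrite [mark _ j.+1]/= mark_j mark_x.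
Qed.

Section MarkedParts.
Variables (c : nat) (s : seq nat).
Hypothesis s_sorted : sorted geq s.
Local Notation A := (marked_parts c s).

Lemma marked_parts_step j : j.+1 < size A -> nth 0 A j.+1 + 3 <= nth 0 A j + odd (nth 0 A j).
Proof.
move: (sorted_marked_parts c s_sorted); case: A => [|a A'] //= /(pathP 0) far_A lt_j.
exact: gg_far_gap (far_A j lt_j).
Qed.

Lemma marked_parts_gap i j : i < j -> j < size A -> nth 0 A j + 2 <= nth 0 A i.
Proof.
elim: j => [|j IHj] //; rewrite ltnS leq_eqVlt => /predU1P[->|lt_ij] lt_j.
  by have := marked_parts_step lt_j; lia.
by have := IHj lt_ij (ltnW lt_j); have := marked_parts_step lt_j; lia.
Qed.

Lemma marked_parts_geq i j : i <= j -> j < size A -> nth 0 A j <= nth 0 A i.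
Proof.
rewrite leq_eqVlt => /predU1P[-> //|lt_ij] /(marked_parts_gap lt_ij); lia.
Qed.

Lemma marked_parts_nth_inj i j : i < size A -> j < size A -> nth 0 A i = nth 0 A j -> i = j.
Proof.
move=> lt_i lt_j eq_ij; case: (ltngtP i j) => // [/marked_parts_gap | /marked_parts_gap].
  by move/(_ lt_j); lia.
by move/(_ lt_i); lia.
Qed.

(* Two even numbers at distance at least 3 are at distance at least 4. *)
Lemma marked_parts_even_gap i j : i <= j -> j < size A ->
  (forall l, i <= l <= j -> ~~ odd (nth 0 A l)) ->
  nth 0 A j + 4 * (j - i) <= nth 0 A i.
Proof.
elim: j => [|j IHj]; first by rewrite leqn0 => /eqP ->; lia.
rewrite leq_eqVlt => /predU1P[->|le_ij] lt_j even_A; first by rewrite subnn; lia.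
have := IHj le_ij (ltnW lt_j) (fun l le_l => even_A l (ltac:(lia))).
have := marked_parts_step lt_j.
have := even_A j (ltac:(lia)); have := even_A j.+1 (ltac:(lia)).
set x := nth 0 A j; set y := nth 0 A j.+1 => /negbTE even_y /negbTE even_x.
rewrite even_x => gap_xy IH.
have: x != y + 3 by apply: contraFneq even_x => ->; rewrite oddD even_y.
lia.
Qed.

End MarkedParts.

Lemma mp_Fin c s j : 0 < j -> j <= N_ c s -> mp c s j = Fin (nth 0 (marked_parts c s) j.-1).
Proof. by move=> /lt0n_neq0/negbTE j_neq0 le_jN; rewrite /mp j_neq0 le_jN. Qed.

Lemma mp_MInf c s j : N_ c s < j -> mp c s j = MInf.
Proof. by move=> lt_Nj; rewrite /mp gtn_eqF ?(leq_ltn_trans (leq0n _) lt_Nj) // leqNgt lt_Nj. Qed.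

Lemma ext_eqn_mpP c s j x : ext_eqn (mp c s j) x ->
  [/\ 0 < j, j <= N_ c s & nth 0 (marked_parts c s) j.-1 = x].
Proof.
rewrite /mp lt0n; case: eqP => //= _; case: leqP => //= le_jN /eqP val_j.
by split.
Qed.

Lemma has_typeP s b T : reflect (start_type s b = T) (has_type s b T).
Proof. by rewrite /has_type; case: (start_type s b); case: T; constructor. Qed.

Lemma st_rec_spec s n :
  [/\ (st_rec s n).1 <> Sm1,
      (st_rec s n).1 = S1 -> one_marked_minus s (p2 s n.+1) 2,
      (st_rec s n).1 = S3 -> one_marked s (p2 s n.+1) &
      [|| one_marked s (p2 s n.+1), one_marked_minus s (p2 s n.+1) 1
        | one_marked_minus s (p2 s n.+1) 2] ->
      (n = 0 -> occurs s (p2 s n.+1 + 2) ->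
        one_marked s (p2 s n.+1) || one_marked s (p2 s n.+1 + 2)) ->
      (st_rec s n).1 <> Snone].
Proof.
case: n => [|n] /=; set v := p2 s _.
  case: (one_marked_minus s v 1); case: (one_marked_minus s v 2);
  case: (occurs s (v + 2)); case: (one_marked s (v + 2)); case: (one_marked s v) => //=;
  by split=> // _ /(_ erefl isT).
by case: (one_marked_minus s v 1); case: (one_marked_minus s v 2);
  case: (one_marked s (v + 2)); case: (_ == v + 2); case: (one_marked s v).
Qed.

Lemma path_leq_last d l x : path leq d l -> x \in d :: l -> x <= last d l.
Proof.
elim: l d x => [|a l IHl] d x /=; first by rewrite mem_seq1 => _ /eqP ->.
case/andP=> le_da path_l; rewrite in_cons => /predU1P[->|]; last exact: IHl.
exact: leq_trans le_da (IHl a a path_l (mem_head a l)).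
Qed.

Lemma lmax_ge s b : b <= N_ 2 s -> no_odd_ge s b -> b <= lmax s.
Proof.
move=> le_bN no_odd; apply: path_leq_last; last first.
  by rewrite in_cons mem_filter no_odd mem_iota ltnS le_bN orbT.
have: sorted leq [seq j <- iota 0 (N_ 2 s).+1 | no_odd_ge s j].
  by apply: sorted_filter; [exact: leq_trans | exact: iota_sorted].
by case: [seq j <- _ | _].
Qed.

Lemma start_typeE s b : b <= lmax s -> start_type s b = (st_rec s b.-1).1.
Proof. by rewrite /start_type ltnNge => ->. Qed.

(* Such a part is even and not 1-marked, so a 1-marked part lies at most 2 below it: one of
   the cases 1, 2, 4 of the definition applies (for b = 1, case 3 or 4 if v + 2 occurs). *)
Lemma start_type_spec s b : sorted geq s -> 0 < b <= N_ 2 s ->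
  (forall x, x \in s -> odd x -> x < p2 s b) ->
  [/\ start_type s b <> Sm1, start_type s b <> Snone,
      start_type s b = S1 -> one_marked_minus s (p2 s b) 2 &
      start_type s b = S3 -> one_marked s (p2 s b)].
Proof.
move=> s_sorted /andP[b_gt0 le_bN] odd_lt.
have le_b_lmax : b <= lmax s.
  apply: (lmax_ge le_bN); apply/allP => x x_in; rewrite mp_Fin //=.
  by case: (boolP (odd x)) => //= /(odd_lt x x_in).
rewrite start_typeE //; case: b b_gt0 le_bN odd_lt {le_b_lmax} => // n _ le_nN odd_lt.
have [not_Sm1 S1_spec S3_spec not_Snone] := st_rec_spec s n; split=> //.
move: odd_lt not_Snone; rewrite /= /occurs; set v := p2 s n.+1 => odd_lt.
have v_in : v \in marked_parts 2 s by apply: mem_nth.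
have [i lt_i [val_i mark_i]] := mem_marked_parts v_in.
have even_v : ~~ odd v by apply/negP => /(odd_lt v); rewrite -val_i mem_nth // ltnn => /(_ isT).
apply.
  have [|j lt_j [le_ji le_ij2 mark_j]] := one_marked_within2 s_sorted lt_i; first by rewrite mark_i.
  rewrite val_i in le_ji le_ij2.
  have [val_j|[val_j|val_j]] : nth 0 s j = v \/ nth 0 s j + 1 = v \/ nth 0 s j + 2 = v by lia.
  - by apply/or3P/Or31/one_markedP; exists j.
  - by apply/or3P/Or32/one_marked_minusP; exists j.
  - by apply/or3P/Or33/one_marked_minusP; exists j.
move=> _ /(nthP 0)[i2 lt_i2 val_i2].
have [mark_i2|] := eqVneq (mark s i2) 1.
  by apply/orP; right; apply/one_markedP; exists i2.
move=> /(one_marked_within2 s_sorted lt_i2)[j lt_j [le_ji le_ij2 mark_j]].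
rewrite val_i2 in le_ji le_ij2.
have [val_j|[val_j|val_j]] : nth 0 s j = v \/ nth 0 s j = v + 1 \/ nth 0 s j = v + 2 by lia.
- by apply/orP; left; apply/one_markedP; exists j.
- have /(odd_lt _ (mem_nth 0 lt_j)) : odd (nth 0 s j) by rewrite val_j addn1 /= even_v.
  by rewrite val_j ltnNge leq_addr.
- by apply/orP; right; apply/one_markedP; exists j.
Qed.

Lemma start_type01 s b : sorted geq s -> 0 < b <= N_ 2 s ->
  (forall x, x \in s -> odd x -> x < p2 s b) ->
  ~~ (has_type s b S2 || has_type s b S3) -> has_type s b S0 || has_type s b S1.
Proof.
move=> s_sorted b_range odd_lt; have [] := start_type_spec s_sorted b_range odd_lt.
by rewrite /has_type; case: (start_type s b).
Qed.

Section LargestOddPart.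
Variables (k r p t : nat) (s : seq nat).
Hypothesis eq_pt : inC_eq_pt k r p t s.
Local Notation A := (marked_parts 2 s).

Lemma Ceq_inC : inC k r s.
Proof. by case: eq_pt. Qed.

Lemma Ceq_sorted : sorted geq s.
Proof. by case: Ceq_inC => /andP[]. Qed.

Lemma Ceq_odd_uniq x : odd x -> count_mem x s <= 1.
Proof. by case: Ceq_inC => _ [odd_uniq _]; apply: odd_uniq. Qed.

Lemma Ceq_top_odd_in : 2 * t + 1 \in s.
Proof. by case: eq_pt => _ [[]]. Qed.

Lemma Ceq_top_odd_max (x : nat) : x \in s -> odd x -> x <= 2 * t + 1.
Proof. by case: eq_pt => _ [[_ top_max] _]; apply: top_max. Qed.

Lemma Ceq_top_odd_mark i : i < size s -> nth 0 s i = 2 * t + 1 -> mark s i = 1 \/ mark s i = 2.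
Proof.
move=> lt_i val_i; case: eq_pt => _ [_ [/(_ _ (mem_zip_gg lt_i) val_i) /= le_mark _]].
by have := mark_gt0 lt_i; lia.
Qed.

Lemma Ceq_p_le_N : p <= N_ 2 s.
Proof. by case: eq_pt => _ [_ [_ []]]. Qed.

Lemma Ceq_mp_p_ge : ext_le (Fin (2 * t + 2)) (mp 2 s p).
Proof. by case: eq_pt => _ [_ [_ [_ []]]]. Qed.

Lemma Ceq_mp_p1_le : ext_le (mp 2 s p.+1) (Fin (2 * t + 2)).
Proof. by case: eq_pt => _ [_ [_ [_ [_ []]]]]. Qed.

Lemma Ceq_S0 : is_2marked_of_type s (2 * t + 2) S0 -> ext_eqn (mp 2 s p.+1) (2 * t + 2).
Proof. by case: eq_pt => _ [_ [_ [_ [_ [_ [S0_cond _]]]]]] /S0_cond[]. Qed.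

Lemma Ceq_S2 : is_2marked_of_type s (2 * t + 2) S2 -> ext_eqn (mp 2 s p) (2 * t + 2).
Proof. by case: eq_pt => _ [_ [_ [_ [_ [_ [_ []]]]]]]. Qed.

Lemma odd_lt_top_even x : x \in s -> odd x -> x < 2 * t + 2.
Proof. by move=> x_in /(Ceq_top_odd_max x_in); rewrite addn2 addn1 ltnS. Qed.

(* 2t+1 is within reach of a 1-marked 2t+2, so it is 2-marked and needs a 1-marked 2t or a
   second 2t+1 below it; the first would be within reach of 2t+2 as well. *)
Lemma not_one_marked_top_even : ~~ one_marked s (2 * t + 2).
Proof.
apply/one_markedP => -[i lt_i [val_i mark_i]].
have [i1 lt_i1 val_i1] := nthP 0 Ceq_top_odd_in.
have mark_i1 : mark s i1 = 2.
  have: mark s i != mark s i1.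
    by apply: (mark_neq_near Ceq_sorted) => //; rewrite ?gg_nearE val_i val_i1 ?oddD ?oddM /=; lia.
  by rewrite mark_i; have [->|->] := Ceq_top_odd_mark lt_i1 val_i1.
have [|j [/andP[lt_i1j lt_j] near_j mark_j]] := mark_neq1_near1 lt_i1; first by rewrite mark_i1.
have le_j := sorted_nth_geq Ceq_sorted (ltnW lt_i1j) lt_j.
move: near_j le_j; rewrite gg_nearE val_i1 oddD oddM /= => near_j le_j.
have [val_j|val_j] : nth 0 s j = 2 * t + 1 \/ nth 0 s j = 2 * t by lia.
  have := count_mem_nth_gt1 (negbT (ltn_eqF lt_i1j)) lt_i1 lt_j (etrans val_i1 (esym val_j)).
  by rewrite val_i1 ltnNge Ceq_odd_uniq // oddD oddM.
have: mark s i != mark s j.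
  by apply: (mark_neq_near Ceq_sorted) => //; rewrite ?gg_nearE val_i val_j ?oddD ?oddM /=; lia.
by rewrite mark_i mark_j.
Qed.

(* Otherwise 2t+1 is within reach of a 1-marked 2t and of a 2-marked 2t+2. *)
Lemma not_one_marked_below_top_even : 2 * t + 2 \in A -> ~~ one_marked_minus s (2 * t + 2) 2.
Proof.
move=> /mem_marked_parts[i2 lt_i2 [val_i2 mark_i2]].
apply/one_marked_minusP => -[j lt_j [val_j mark_j]].
have [i1 lt_i1 val_i1] := nthP 0 Ceq_top_odd_in.
have: mark s i1 != mark s j.
  by apply: (mark_neq_near Ceq_sorted) => //; rewrite ?gg_nearE val_i1 ?oddD ?oddM /=; lia.
have: mark s i2 != mark s i1.
  by apply: (mark_neq_near Ceq_sorted) => //; rewrite ?gg_nearE val_i1 val_i2 ?oddD ?oddM /=; lia.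
by rewrite mark_i2 mark_j; have [->|->] := Ceq_top_odd_mark lt_i1 val_i1.
Qed.

Lemma top_even_type01 b :
  0 < b <= N_ 2 s -> p2 s b = 2 * t + 2 -> b != p -> has_type s b S0 || has_type s b S1.
Proof.
move=> b_range val_b ne_bp.
have odd_lt x : x \in s -> odd x -> x < p2 s b by rewrite val_b; apply: odd_lt_top_even.
have [not_Sm1 not_Snone _ S3_spec] := start_type_spec Ceq_sorted b_range odd_lt.
rewrite /has_type; case E: (start_type s b) not_Sm1 not_Snone S3_spec => //= _ _ S3_spec.
  have /Ceq_S2/ext_eqn_mpP[p_gt0 le_pN val_p] : is_2marked_of_type s (2 * t + 2) S2.
    by exists b; case/andP: b_range => b_gt0 le_bN; split=> //; apply/has_typeP.
  case/andP: b_range => b_gt0 le_bN; case/negP: ne_bp; apply/eqP.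
  have: p.-1 = b.-1.
    by apply: (marked_parts_nth_inj (c := 2) Ceq_sorted); rewrite ?prednK // val_p -val_b.
  by move/(congr1 S); rewrite !prednK.
by move: not_one_marked_top_even; rewrite -val_b S3_spec.
Qed.

Lemma top_even_p_not_type01 :
  0 < p -> p2 s p = 2 * t + 2 -> ~~ (has_type s p S0 || has_type s p S1).
Proof.
move=> p_gt0 val_p; apply/norP; split; apply/negP => type_p.
  have /Ceq_S0/ext_eqn_mpP[_ le_p1N val_p1] : is_2marked_of_type s (2 * t + 2) S0.
    by exists p; split=> //; apply: Ceq_p_le_N.
  have := marked_parts_gap (c := 2) Ceq_sorted (ltnSn p.-1); rewrite prednK // => /(_ le_p1N).
  by move: val_p; rewrite /p2 /= val_p1 => ->; lia.
have odd_lt x : x \in s -> odd x -> x < p2 s p by rewrite val_p; apply: odd_lt_top_even.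
have [_ _ S1_spec _] := start_type_spec Ceq_sorted (introT andP (conj p_gt0 Ceq_p_le_N)) odd_lt.
have: 2 * t + 2 \in A by rewrite -val_p; apply: mem_nth; rewrite prednK //; apply: Ceq_p_le_N.
move/not_one_marked_below_top_even; rewrite -val_p S1_spec //.
exact/has_typeP.
Qed.

Lemma sum_gt_or_adjacent p' t' :
  (forall x, x \in s -> odd x -> x < 2 * t' + 1) ->
  ext_lt (mp 2 s p'.+1) (Fin (2 * t' + 1)) ->
  p + t < p' + t' \/ [/\ p = p'.+1, t' = t.+1 & p2 s p = 2 * t + 2].
Proof.
move=> odd_lt' mp_p'1_lt.
have lt_tt' : t < t'.
  by have := odd_lt' _ Ceq_top_odd_in; rewrite oddD oddM /= => /(_ isT); lia.
have [le_pp'|lt_p'p] := leqP p p'; first by left; lia.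
have [j eq_p] : exists j, p = j.+1 by exists p.-1; lia.
have lt_jA : j < size A by move: Ceq_p_le_N; rewrite eq_p.
have ge_j : 2 * t + 2 <= nth 0 A j by move: Ceq_mp_p_ge; rewrite eq_p mp_Fin.
have lt_p' : nth 0 A p' < 2 * t' + 1.
  by move: mp_p'1_lt; rewrite mp_Fin //=; apply: leq_trans Ceq_p_le_N.
have even_A l : p' <= l <= j -> ~~ odd (nth 0 A l).
  move=> /andP[_ le_lj]; have lt_lA := leq_ltn_trans le_lj lt_jA.
  apply/negP => /(Ceq_top_odd_max (mem_nth_marked_parts lt_lA)).
  by have := marked_parts_geq (c := 2) Ceq_sorted le_lj lt_jA; lia.
have := marked_parts_even_gap (c := 2) Ceq_sorted (_ : p' <= j) lt_jA even_A.
move=> /(_ (ltac:(lia))) gap.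
have [|[eq_j eq_t']] : p + t < p' + t' \/ j = p' /\ t' = t.+1 by lia.
  by left.
by right; split=> //; rewrite /p2 eq_p /=; subst; lia.
Qed.

Lemma inC_lt_pt_sum_gt k' r' p' t' :
  inC_lt_pt k' r' p' t' s -> p + t < p' + t'.
Proof.
case=> _ [odd_lt' [_ [mp_p'1_lt [_ [_ type_p'1]]]]].
have [//|[eq_p eq_t' val_p]] := sum_gt_or_adjacent odd_lt' mp_p'1_lt.
case/negP: (top_even_p_not_type01 (ltac:(by rewrite eq_p)) val_p).
rewrite eq_p; apply: type_p'1; rewrite mp_Fin -?eq_p ?Ceq_p_le_N //=; last by rewrite eq_p.
by move: val_p; rewrite /p2 eq_t' => ->; apply/eqP; lia.
Qed.

(* The number of 2-marked parts larger than 2u+1, since A is decreasing. *)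
Let n_above u := find (fun a => a <= 2 * u + 1) A.

Lemma lt_nth_n_above u l : l < n_above u -> 2 * u + 1 < nth 0 A l.
Proof. by move/(before_find 0); rewrite ltnNge => ->. Qed.

Lemma nth_n_above_le u l : n_above u <= l -> l < size A -> nth 0 A l <= 2 * u + 1.
Proof.
move=> le_l lt_l; have has_le : has (fun a => a <= 2 * u + 1) A.
  by rewrite has_find (leq_ltn_trans le_l lt_l).
have /= := nth_find 0 has_le; rewrite -/(n_above u).
by have := marked_parts_geq (c := 2) Ceq_sorted le_l lt_l; lia.
Qed.

Lemma n_above_succ u : n_above u.+1 <= n_above u.
Proof.
rewrite leqNgt; apply/negP => lt_above.
have := lt_nth_n_above lt_above; have := nth_n_above_le (leqnn (n_above u)).
by rewrite (leq_trans lt_above) ?find_size //; lia.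
Qed.

Lemma n_above_top_odd : n_above t.+1 <= p.
Proof.
rewrite leqNgt; apply/negP => lt_above; have := lt_nth_n_above lt_above.
move: Ceq_mp_p1_le; rewrite mp_Fin //=; last exact: leq_trans lt_above (find_size _ _).
lia.
Qed.

Lemma threshold_exists m' : p + t < m' ->
  exists u, [/\ t < u, u + n_above u = m' & forall v, t < v < u -> v + n_above v < m'].
Proof.
move=> lt_m'.
have exP : exists u, (t < u) && (m' <= u + n_above u) by exists m'; apply/andP; split; lia.
case: (ex_minnP exP) => u /andP[lt_tu le_m'] min_u.
have below v : t < v < u -> v + n_above v < m'.
  case/andP=> lt_tv lt_vu; rewrite ltnNge; apply/negP => le_v.
  by have := min_u v (introT andP (conj lt_tv le_v)); lia.
exists u; split=> //; apply/eqP; rewrite eqn_leq le_m' andbT.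
have [->|ne_u] := eqVneq u t.+1; first by have := n_above_top_odd; lia.
have := below u.-1 (ltac:(lia)); have := n_above_succ u.-1; rewrite prednK //; lia.
Qed.

Lemma mp_n_above_succ_lt u : t < u -> ext_lt (mp 2 s (n_above u).+1) (Fin (2 * u + 1)).
Proof.
move=> lt_tu; case: (leqP (n_above u).+1 (size A)) => [lt_qA|lt_Aq]; last by rewrite mp_MInf.
rewrite mp_Fin //= ltn_neqAle nth_n_above_le // andbT; apply/eqP => val_q.
have := Ceq_top_odd_max (mem_nth_marked_parts lt_qA).
by rewrite val_q oddD oddM /= => /(_ isT); lia.
Qed.

Lemma mp_n_above_gt u : ext_lt (Fin (2 * u + 1)) (mp 2 s (n_above u)).
Proof.
case: (posnP (n_above u)) => [->|q_gt0] //.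
by rewrite mp_Fin ?find_size //=; apply: lt_nth_n_above; rewrite prednK.
Qed.

Lemma n_above_type01 u :
  t < u -> p + t < u + n_above u ->
  (forall v, t < v < u -> v + n_above v < u + n_above u) ->
  ext_eqn (mp 2 s (n_above u).+1) (2 * u) ->
  has_type s (n_above u).+1 S0 || has_type s (n_above u).+1 S1.
Proof.
set q := n_above u => lt_tu lt_sum min_u /ext_eqn_mpP[_ lt_qN val_q].
rewrite /= in val_q; have [eq_u|ne_u] := eqVneq u t.+1.
  apply: top_even_type01 => //; first by rewrite /p2 /= val_q eq_u; lia.
  by apply: contraTneq lt_sum => eq_qp; rewrite -leqNgt; lia.
have lt_q_above : q < n_above u.-1.
  by rewrite ltnNge; apply/negP => /nth_n_above_le /(_ lt_qN); lia.
by have := min_u u.-1 (ltac:(lia)); lia.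
Qed.

Lemma mp_n_above_pred_ge u : t < u -> 0 < n_above u ->
  nth 0 A (n_above u).-1 = 2 * u + 2 -> ext_le (Fin (2 * u + 5)) (mp 2 s (n_above u).-1).
Proof.
set q := n_above u => lt_tu q_gt0 val_q; case: (posnP q.-1) => [->|q1_gt0] //.
have [j eq_q] : exists j, q = j.+2 by exists q.-2; lia.
have lt_j1A : j.+1 < size A by rewrite -eq_q find_size.
rewrite mp_Fin ?eq_q //= ?(ltnW lt_j1A) //; move: val_q; rewrite eq_q /= => val_j1.
have := marked_parts_step (c := 2) Ceq_sorted lt_j1A; rewrite val_j1.
case: (boolP (odd _)) => [/(Ceq_top_odd_max (mem_nth_marked_parts (ltnW lt_j1A)))|_] /=; lia.
Qed.

Lemma inC_lt_pt_shift u : t < u -> 0 < n_above u ->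
  nth 0 A (n_above u).-1 = 2 * u + 2 ->
  ~~ (has_type s (n_above u) S2 || has_type s (n_above u) S3) ->
  inC_lt_pt k r (n_above u).-1 u.+1 s.
Proof.
set q := n_above u => lt_tu q_gt0 val_q type_q.
have ge_q1 := mp_n_above_pred_ge lt_tu q_gt0 val_q.
split; first exact: Ceq_inC.
split; first by move=> x x_in /(Ceq_top_odd_max x_in); lia.
split; first exact: leq_trans (leq_pred q) (find_size _ _).
split; first by rewrite prednK // mp_Fin ?find_size //= val_q; lia.
split; first by case: (mp 2 s q.-1) ge_q1 => //= x; lia.
split; first by case: (mp 2 s q.-1) ge_q1 => //= x /[swap] /eqP; lia.
rewrite prednK // => _; apply: (start_type01 Ceq_sorted _ _ type_q); first by rewrite q_gt0 find_size.
by rewrite /p2 val_q => x x_in /(Ceq_top_odd_max x_in); lia.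
Qed.

(* For the least u with u + n_above u = m', the pair (n_above u, u) works unless the smallest
   2-marked part above 2u+1 is 2u+2 of type s_0 or s_1; then (n_above u - 1, u + 1) works. *)
Lemma inC_lt_pt_exists m' :
  p + t < m' -> exists p' t', p' + t' = m' /\ inC_lt_pt k r p' t' s.
Proof.
move=> lt_m'; have [u [lt_tu sum_u min_u]] := threshold_exists lt_m'.
have [/and3P[q_gt0 /eqP val_q type_q]|no_shift] :=
  boolP [&& 0 < n_above u, nth 0 A (n_above u).-1 == 2 * u + 2
          & ~~ (has_type s (n_above u) S2 || has_type s (n_above u) S3)].
  by exists (n_above u).-1, u.+1; split; [lia | apply: inC_lt_pt_shift].
exists (n_above u), u; split; first lia.
split; first exact: Ceq_inC.
split; first by move=> x x_in /(Ceq_top_odd_max x_in); lia.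
split; first exact: find_size.
split; first exact: mp_n_above_succ_lt.
split; first exact: mp_n_above_gt.
split.
  case/ext_eqn_mpP => q_gt0 _ val_q; apply: contraR no_shift => type_q.
  by rewrite q_gt0 val_q eqxx.
apply: n_above_type01 => //; first lia.
by move=> v /min_u; lia.
Qed.

End LargestOddPart.

Theorem theorem5p8 (k r m m' : nat) (s : seq nat) :
  3 <= r -> r <= k -> inC_eq k r m s -> (inC_lt k r m' s <-> m < m').
Proof.
move=> _ _ [p [t [<- eq_pt]]].
split=> [[p' [t' [<- /(inC_lt_pt_sum_gt eq_pt)]]] // | /(inC_lt_pt_exists eq_pt)].
by case=> p' [t' [<- lt_pt]]; exists p', t'.
Qed.
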